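(* Let $\mathcal{C}$ be the complete computational structure of a linear system $G$ with generalized state-space realization $\dot{x}=Ax+\hat{A}w+Bu$, $w=\bar{A}x+\tilde{A}w+\bar{B}u$, $y=Cx+\bar{C}w+Du$ ($I-\tilde{A}$ invertible), and suppose its minimal intricacy realization $(A_o,B_o,C_o,D_o)$ has $C_o=\begin{bmatrix}C_{11}&C_{12}\\C_{21}&C_{22}\end{bmatrix}$ with $C_{11}$ invertible. Then $\mathcal{C}$ specifies a unique subsystem structure, a unique signal structure, and a unique sparsity structure.
   Context: Inputs $u\in\mathbb{R}^m$, states $x\in\mathbb{R}^n$, auxiliary variables $w\in\mathbb{R}^l$, outputs $y\in\mathbb{R}^p$. Complete computational structure $\mathcal{C}$: directed graph with one vertex per input, state, auxiliary variable and output; an edge from vertex $a$ to vertex $b$ (labelled by the variable produced at $a$) whenever the equation defining the variable at $b$ depends on the variable at $a$ (nonzero coefficient). Inputs and outputs are manifest; states are hidden; auxiliary variables are hidden unless passed directly out as outputs. A partition of $V(\mathcal{C})$ is admissible if every edge between distinct components represents a manifest variable. The subsystem structure is the condensation graph of $\mathcal{C}$ with respect to an admissible partition of maximal cardinality (vertices = components, labelled by their transfer functions; edge $(S_i,S_j)$ if some edge of $\mathcal{C}$ goes from $S_i$ to $S_j$). Minimal intricacy realization: $A_o=A+\hat{A}(I-\tilde{A})^{-1}\bar{A}$, $B_o=B+\hat{A}(I-\tilde{A})^{-1}\bar{B}$, $C_o=C+\bar{C}(I-\tilde{A})^{-1}\bar{A}$, $D_o=D+\bar{C}(I-\tilde{A})^{-1}\bar{B}$.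 Signal structure: let $p_1=\operatorname{rank}C_o$, with outputs/states ordered so that $C_{11}\in\mathbb{R}^{p_1\times p_1}$ is invertible. Let $\begin{bmatrix}N_1\\N_2\end{bmatrix}$ ($N_2\in\mathbb{R}^{(n-p_1)\times(n-p_1)}$) have columns forming a basis of $\ker C_o$ (then $N_2$ is invertible), and $T=\begin{bmatrix}C_{11}&C_{12}\\0&N_2^{-1}\end{bmatrix}$. In coordinates $z=Tx$ the system reads $\dot{z}_1=A_{11}z_1+A_{12}z_2+B_1u$, $\dot{z}_2=A_{21}z_1+A_{22}z_2+B_2u$, $y_1=z_1+D_1u$, $y_2=C_2z_1+D_2u$, with $C_2=C_{21}C_{11}^{-1}$. Put $W(s)=A_{11}+A_{12}(sI-A_{22})^{-1}A_{21}$, $V(s)=B_1+A_{12}(sI-A_{22})^{-1}B_2$, $\hat{D}(s)$ the diagonal part of $W(s)$, $Q(s)=(sI-\hat{D})^{-1}(W-\hat{D})$, $P(s)=(sI-\hat{D})^{-1}V$; $(Q,P)$ is the dynamical structure function and $Y_1=QY_1+(P+(I-Q)D_1)U$, $Y_2=C_2Y_1+D_2U$. The signal structure is the directed graph with vertices $u_1,\dots,u_m,y_{11},\dots,y_{1p_1},y_{21},\dots,y_{2(p-p_1)}$ and an edge $u_i\to y_{1j}$, $u_i\to y_{2j}$, $y_{1i}\to y_{1j}$, $y_{1i}\to y_{2j}$ whenever the corresponding entry of $P+(I-Q)D_1$, $D_2$, $Q$, $C_2$ respectively is nonzero, labelled by that entry. Sparsity structure: bipartite directed graph with vertices $u_1,\dots,u_m,y_1,\dots,y_p$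 and an edge $u_i\to y_j$ (labelled $G_{ji}$) whenever the $(j,i)$ entry of the transfer function $G(s)=C_o(sI-A_o)^{-1}B_o+D_o$ is nonzero. *)

From HB Require Import structures.
From mathcomp Require Import all_boot all_order all_algebra.
From mathcomp Require Import fraction.
Set Implicit Arguments. Unset Strict Implicit. Unset Printing Implicit Defensive.
Import Order.TTheory GRing.Theory Num.Theory.
Local Open Scope ring_scope.

Definition ratF (R : realFieldType) := {fraction {poly R}}.

Definition cstF (R : realFieldType) (a : R) : ratF R := FracField.tofrac (a%:P).
Definition sF (R : realFieldType) : ratF R := FracField.tofrac 'X.
Definition mxF (R : realFieldType) (k q : nat) (M : 'M[R]_(k, q)) : 'M[ratF R]_(k, q) :=
  map_mx (@cstF R) M.

Section MinInt.
Variables (R : realFieldType) (m n l p : nat).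
Variables (A : 'M[R]_n) (Ahat : 'M[R]_(n, l)) (B : 'M[R]_(n, m))
          (Abar : 'M[R]_(l, n)) (Atil : 'M[R]_l) (Bbar : 'M[R]_(l, m))
          (C : 'M[R]_(p, n)) (Cbar : 'M[R]_(p, l)) (D : 'M[R]_(p, m)).

Definition Ao : 'M[R]_n := A + Ahat *m invmx (1%:M - Atil) *m Abar.
Definition Bo : 'M[R]_(n, m) := B + Ahat *m invmx (1%:M - Atil) *m Bbar.
Definition Co : 'M[R]_(p, n) := C + Cbar *m invmx (1%:M - Atil) *m Abar.
Definition Do : 'M[R]_(p, m) := D + Cbar *m invmx (1%:M - Atil) *m Bbar.

Definition ccs_vertex : finType := (('I_m + 'I_n) + ('I_l + 'I_p))%type.

Definition vU (i : 'I_m) : ccs_vertex := inl (inl i).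
Definition vX (i : 'I_n) : ccs_vertex := inl (inr i).
Definition vW (i : 'I_l) : ccs_vertex := inr (inl i).
Definition vY (i : 'I_p) : ccs_vertex := inr (inr i).

(* coefficient of the variable produced at a in the equation defining the
   variable at b (0 if b is an input, which has no defining equation, or
   if a is an output, whose variable appears in no equation) *)
Definition ccs_coef (a b : ccs_vertex) : R :=
  match b with
  | inl (inl _) => 0
  | inl (inr i) =>
      match a with
      | inl (inl j) => B i j | inl (inr j) => A i j
      | inr (inl j) => Ahat i j | inr (inr _) => 0 end
  | inr (inl i) =>
      match a with
      | inl (inl j) => Bbar i j | inl (inr j) => Abar i j
      | inr (inl j) => Atil i j | inr (inr _) => 0 end
  | inr (inr i) =>
      match a with
      | inl (inl j) => D i j | inl (inr j) => C i j
      | inr (inl j) => Cbar i j | inr (inr _) => 0 end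
  end.

Definition ccs_edge (a b : ccs_vertex) : bool := ccs_coef a b != 0.

(* auxiliary variable w_k is passed directly out as an output:
   some output equation reads y_j = w_k *)
Definition aux_output (k : 'I_l) : Prop :=
  exists j : 'I_p, [/\ forall i, C j i = 0,
                       forall i, Cbar j i = (i == k)%:R
                     & forall i, D j i = 0].

Definition manifest (a : ccs_vertex) : Prop :=
  match a with
  | inl (inl _) => True
  | inl (inr _) => False
  | inr (inl k) => aux_output k
  | inr (inr _) => True
  end.

Definition admissible (P : {set {set ccs_vertex}}) : Prop :=
  partition P [set: ccs_vertex] /\
  forall a b, ccs_edge a b -> pblock P a != pblock P b -> manifest a.

Definition max_admissible (P : {set {set ccs_vertex}}) : Prop :=
  admissible P /\ forall P', admissible P' -> (#|P'| <= #|P|)%N.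

Definition condensation_edge (P : {set {set ccs_vertex}}) (S1 S2 : {set ccs_vertex}) : Prop :=
  [/\ S1 \in P, S2 \in P & exists a b, [/\ a \in S1, b \in S2 & ccs_edge a b]].

Definition transfer_fun : 'M[ratF R]_(p, m) :=
  mxF Co *m invmx ((sF R)%:M - mxF Ao) *m mxF Bo + mxF Do.

(* transfer function computed directly from the generalized realization
   (eliminating nothing by hand):
   Y = [C Cbar] (diag(sI, I) - [A Ahat; Abar Atil])^-1 [B; Bbar] U + D U *)
Definition transfer_fun_gen : 'M[ratF R]_(p, m) :=
  mxF (row_mx C Cbar) *m
    invmx (block_mx ((sF R)%:M) 0 0 1%:M - mxF (block_mx A Ahat Abar Atil))
    *m mxF (col_mx B Bbar) + mxF D.

(* sparsity structure: label of edge u_i -> y_j (edge present iff nonzero) *)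
Definition sparsity_label (i : 'I_m) (j : 'I_p) : ratF R := transfer_fun j i.

End MinInt.

(* Signal structure, for outputs/states ordered so that                *)
(* p = p1 + p2, n = p1 + n2, with C11 = ulsubmx Co invertible.          *)
Section Signal.
Variables (R : realFieldType) (m l p1 p2 n2 : nat).
Variables (A : 'M[R]_(p1 + n2)) (Ahat : 'M[R]_(p1 + n2, l)) (B : 'M[R]_(p1 + n2, m))
          (Abar : 'M[R]_(l, p1 + n2)) (Atil : 'M[R]_l) (Bbar : 'M[R]_(l, m))
          (C : 'M[R]_(p1 + p2, p1 + n2)) (Cbar : 'M[R]_(p1 + p2, l))
          (D : 'M[R]_(p1 + p2, m)).
Variable (N : 'M[R]_(p1 + n2, n2)).

Let Co' := Co Abar Atil C Cbar.
Let Ao' := Ao A Ahat Abar Atil.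
Let Bo' := Bo Ahat B Atil Bbar.
Let Do' := Do Atil Bbar Cbar D.

Definition kernel_basis : Prop := Co' *m N = 0 /\ \rank N = n2.

Definition Tmx : 'M[R]_(p1 + n2) :=
  block_mx (ulsubmx Co') (ursubmx Co') 0 (invmx (dsubmx N)).

Definition Az : 'M[R]_(p1 + n2) := Tmx *m Ao' *m invmx Tmx.
Definition Bz : 'M[R]_(p1 + n2, m) := Tmx *m Bo'.

Definition C2 : 'M[R]_(p2, p1) := dlsubmx Co' *m invmx (ulsubmx Co').
Definition D1 : 'M[R]_(p1, m) := usubmx Do'.
Definition D2 : 'M[R]_(p2, m) := dsubmx Do'.

Definition Wsig : 'M[ratF R]_p1 :=
  mxF (ulsubmx Az) + mxF (ursubmx Az) *m invmx ((sF R)%:M - mxF (drsubmx Az))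
                     *m mxF (dlsubmx Az).
Definition Vsig : 'M[ratF R]_(p1, m) :=
  mxF (usubmx Bz) + mxF (ursubmx Az) *m invmx ((sF R)%:M - mxF (drsubmx Az))
                    *m mxF (dsubmx Bz).
Definition Dhat : 'M[ratF R]_p1 := \matrix_(i, j) (if i == j then Wsig i j else 0).

Definition Qdsf : 'M[ratF R]_p1 := invmx ((sF R)%:M - Dhat) *m (Wsig - Dhat).
Definition Pdsf : 'M[ratF R]_(p1, m) := invmx ((sF R)%:M - Dhat) *m Vsig.
Definition Ptil : 'M[ratF R]_(p1, m) := Pdsf + (1%:M - Qdsf) *m mxF D1.

(* vertices of the signal structure: u_i, y_{1i}, y_{2i} *)
Definition sig_vertex : finType := ('I_m + ('I_p1 + 'I_p2))%type.

(* label of the edge a -> b (the edge is present iff the label is nonzero) *)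
Definition signal_structure (a b : sig_vertex) : ratF R :=
  match a, b with
  | inl i, inr (inl j) => Ptil j i
  | inl i, inr (inr j) => cstF (D2 j i)
  | inr (inl i), inr (inl j) => Qdsf j i
  | inr (inl i), inr (inr j) => cstF (C2 j i)
  | _, _ => 0
  end.

End Signal.

From HB Require Import structures.
From mathcomp Require Import all_boot all_order all_algebra.
From mathcomp Require Import fraction.
Set Implicit Arguments. Unset Strict Implicit. Unset Printing Implicit Defensive.
Import GRing.Theory.

(* An edge may join two components of an admissible partition only if its
   source is manifest, so every admissible partition coarsens the connected
   components of the edges with hidden source; these components are
   themselves admissible, hence form the unique admissible partition of
   maximal cardinality.
   Since [C11] is invertible and [rank Co = p1], the Schur complement of
   [C11] in [Co] vanishes and every kernel basis is [col_mx (- C11^-1 C12) 1]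
   times its (invertible) lower block.  Two kernel bases thus change
   [z = T x] by a similarity [diag(1, X)], under which
   [A12 (sI - A22)^-1 A21] and [A12 (sI - A22)^-1 B2] are invariant.
   Finally, inverting [diag(sI, 1) - [A Ahat; Abar Atil]] by the Schur
   complement of its invertible lower-right block [1 - Atil] eliminates [w]
   and leaves exactly the transfer function of [(Ao, Bo, Co, Do)]. *)

Lemma partition_pblock_imset (T : finType) (P : {set {set T}}) (D : {set T}) :
  partition P D -> P = pblock P @: D.
Proof.
move=> partP; have [/eqP covP tiP _] := and3P partP.
apply/setP => B; apply/idP/imsetP => [PB | [x Dx ->]]; last first.
  by rewrite pblock_mem ?covP.
have /set0Pn[x Bx] := partition_neq0 partP PB.
exists x; last by rewrite (def_pblock tiP PB Bx).
by rewrite -covP; apply/bigcupP; exists B.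
Qed.

Lemma partition_eq_pblock (T : finType) (P Q : {set {set T}}) (D : {set T}) :
  partition P D -> partition Q D ->
  {in D &, forall x y,
    (pblock P x == pblock P y) = (pblock Q x == pblock Q y)} ->
  P = Q.
Proof.
move=> partP partQ eqPQ.
rewrite -(preim_partition_pblock partP) -(preim_partition_pblock partQ).
apply: eq_in_imset => x Dx; apply/setP => y; rewrite !inE.
by case Dy: (y \in D) => //=; rewrite eqPQ.
Qed.

Section MaxAdmissiblePartition.
Variables (T : finType) (e : rel T) (manifest : pred T).

Definition admissible_partition (P : {set {set T}}) : Prop :=
  partition P [set: T] /\
  forall a b, e a b -> pblock P a != pblock P b -> manifest a.

Definition hidden_link : rel T :=
  fun a b => (e a b && ~~ manifest a) || (e b a && ~~ manifest b).

Definition hidden_components : {set {set T}} :=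
  equivalence_partition (connect hidden_link) [set: T].

Local Notation P0 := hidden_components.

Lemma hidden_link_connect_sym : connect_sym hidden_link.
Proof. by apply: sym_connect_sym => a b; rewrite /hidden_link orbC. Qed.

Lemma hidden_connect_equiv :
  {in [set: T] & &, equivalence_rel (connect hidden_link)}.
Proof.
move=> x y z _ _ _; split=> [|xy]; first exact: connect0.
exact: (same_connect hidden_link_connect_sym xy).
Qed.

Lemma hidden_components_partition : partition P0 [set: T].
Proof. exact: equivalence_partitionP hidden_connect_equiv. Qed.

Lemma mem_pblock_hidden x y : (y \in pblock P0 x) = connect hidden_link x y.
Proof. by rewrite (pblock_equivalence_partition hidden_connect_equiv) ?inE. Qed.

Lemma eq_pblock_hidden x y :
  (pblock P0 x == pblock P0 y) = connect hidden_link x y.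
Proof.
have [/eqP covP tiP _] := and3P hidden_components_partition.
by rewrite eq_pblock ?covP ?inE // mem_pblock_hidden.
Qed.

Lemma hidden_components_admissible : admissible_partition P0.
Proof.
split=> [|a b ab]; first exact: hidden_components_partition.
apply: contraR => hid_a; rewrite eq_pblock_hidden.
by apply: connect1; rewrite /hidden_link ab hid_a.
Qed.

Section Admissible.
Variable P : {set {set T}}.
Hypothesis admP : admissible_partition P.

Lemma admissible_pblock_connect x y :
  connect hidden_link x y -> pblock P x = pblock P y.
Proof.
have [partP cutP] := admP.
pose blk := [pred z | pblock P z == pblock P x].
have closed_blk : closed hidden_link blk.
  apply: intro_closed; first exact: hidden_link_connect_sym.
  move=> u v /orP[/andP[uv hid_u] | /andP[vu hid_v]]; rewrite !inE => /eqP <-.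
    by apply/eqP/esym; apply: contraNeq hid_u; apply: cutP uv.
  by apply/eqP; apply: contraNeq hid_v; apply: cutP vu.
by move=> /(closed_connect closed_blk); rewrite !inE eqxx => /esym/eqP.
Qed.

Definition coarsen (B : {set T}) : {set T} :=
  if [pick x in B] is Some x then pblock P x else set0.

Lemma coarsen_pblock x : coarsen (pblock P0 x) = pblock P x.
Proof.
have [/eqP covP _ _] := and3P hidden_components_partition.
rewrite /coarsen; case: pickP => [y | /(_ x)].
  by rewrite mem_pblock_hidden => /admissible_pblock_connect.
by rewrite mem_pblock covP inE.
Qed.

Lemma admissible_coarsen : P = coarsen @: P0.
Proof.
rewrite (partition_pblock_imset admP.1).
rewrite (partition_pblock_imset hidden_components_partition) -imset_comp.
by apply: eq_imset => x; rewrite /= coarsen_pblock.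
Qed.

Lemma card_admissible_le : (#|P| <= #|P0|)%N.
Proof. by rewrite {1}admissible_coarsen leq_imset_card. Qed.

Lemma admissible_card_eq : #|P| = #|P0| -> P = P0.
Proof.
rewrite {1}admissible_coarsen => /eqP /imset_injP inj_coarsen.
have [/eqP covP _ _] := and3P hidden_components_partition.
apply: partition_eq_pblock admP.1 hidden_components_partition _ => x y _ _.
apply/eqP/eqP => [eqPxy | /eqP]; last first.
  by rewrite eq_pblock_hidden => /admissible_pblock_connect.
by apply: inj_coarsen; rewrite ?pblock_mem ?covP ?inE // !coarsen_pblock.
Qed.
End Admissible.

Lemma max_admissible_partitionE P :
  admissible_partition P /\
    (forall Q, admissible_partition Q -> (#|Q| <= #|P|)%N) <-> P = P0.
Proof.
split=> [[admP maxP] | ->]; last first.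
  by split=> [|Q /card_admissible_le //]; exact: hidden_components_admissible.
apply: admissible_card_eq => //; apply/eqP.
rewrite eqn_leq card_admissible_le ?maxP //.
exact: hidden_components_admissible.
Qed.

End MaxAdmissiblePartition.

Local Open Scope ring_scope.

Section ComputationalStructure.
Variables (R : realFieldType) (m n l p : nat).
Variables (A : 'M[R]_n) (Ahat : 'M[R]_(n, l)) (B : 'M[R]_(n, m))
          (Abar : 'M[R]_(l, n)) (Atil : 'M[R]_l) (Bbar : 'M[R]_(l, m))
          (C : 'M[R]_(p, n)) (Cbar : 'M[R]_(p, l)) (D : 'M[R]_(p, m)).

Definition aux_outputb (k : 'I_l) : bool :=
  [exists j, [&& [forall i, C j i == 0], [forall i, Cbar j i == (i == k)%:R]
               & [forall i, D j i == 0]]].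

Lemma aux_outputP k : reflect (aux_output C Cbar D k) (aux_outputb k).
Proof.
apply: (iffP existsP) => [[j /and3P[/forallP C0 /forallP Cbar1 /forallP D0]] |
                          [j [C0 Cbar1 D0]]]; exists j.
  by split=> i; apply/eqP.
by apply/and3P; split; apply/forallP => i; apply/eqP.
Qed.

Definition manifestb (a : ccs_vertex m n l p) : bool :=
  match a with
  | inl (inl _) | inr (inr _) => true
  | inl (inr _) => false
  | inr (inl k) => aux_outputb k
  end.

Lemma manifestP a : reflect (manifest C Cbar D a) (manifestb a).
Proof.
by case: a => [[] | [k |]] /=; (exact: aux_outputP || by constructor).
Qed.

Local Notation edge := (ccs_edge A Ahat B Abar Atil Bbar C Cbar D).

Lemma admissibleE P :
  admissible A Ahat B Abar Atil Bbar C Cbar D P <->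
  admissible_partition edge manifestb P.
Proof.
by split=> [] [partP cutP]; split=> // a b ab /(cutP _ _ ab)/manifestP.
Qed.

Lemma max_admissibleE P :
  max_admissible A Ahat B Abar Atil Bbar C Cbar D P <->
  P = hidden_components edge manifestb.
Proof.
apply: iff_trans (max_admissible_partitionE _ _ _).
by split=> [] [/admissibleE admP maxP]; split=> // Q /admissibleE /maxP.
Qed.

End ComputationalStructure.

Section KernelBasis.
Variables (F : fieldType) (p1 p2 n2 : nat) (M : 'M[F]_(p1 + p2, p1 + n2)).
Hypothesis M11_unit : ulsubmx M \in unitmx.

Local Notation M11 := (ulsubmx M : 'M_p1).
Local Notation M12 := (ursubmx M : 'M_(p1, n2)).

Definition ker_block_basis : 'M[F]_(p1 + n2, n2) :=
  col_mx (- invmx M11 *m M12) 1%:M.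

Lemma ker_block_mxE k (N : 'M_(p1 + n2, k)) :
  M *m N = 0 -> N = ker_block_basis *m dsubmx N.
Proof.
rewrite -[M]submxK -[N in _ *m N]vsubmxK mul_block_col => /eqP.
rewrite col_mx_eq0 addr_eq0 => /andP[/eqP N1 _].
by rewrite mul_col_mx mul1mx !mulNmx -mulmxA -mulmxN -N1 mulKmx // vsubmxK.
Qed.

Lemma rank_ker_block_basis : \rank ker_block_basis = n2.
Proof.
apply/eqP; rewrite eqn_leq rank_leq_col -{1}(mxrank1 F n2).
have <- : row_mx 0 1%:M *m ker_block_basis = 1%:M.
  by rewrite mul_row_col mul0mx mul1mx add0r.
exact: mxrankM_maxr.
Qed.

Lemma ker_basis_dsubmx_unit (N : 'M_(p1 + n2, n2)) :
  M *m N = 0 -> \rank N = n2 -> dsubmx N \in unitmx.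
Proof.
move=> /ker_block_mxE defN rankN.
rewrite -row_free_unit /row_free eqn_leq rank_leq_row -{1}rankN {1}defN.
exact: mxrankM_maxr.
Qed.

Hypothesis rankM : \rank M = p1.

Lemma drsubmx_rank_ulsubmx :
  drsubmx M = dlsubmx M *m invmx (ulsubmx M) *m ursubmx M.
Proof.
have rank_up : \rank (usubmx M) = p1.
  apply/eqP; rewrite eqn_leq rank_leq_row -{1}(mxrank_unit M11_unit).
  have -> : ulsubmx M = usubmx M *m col_mx 1%:M 0.
    by rewrite -[usubmx M]hsubmxK mul_row_col mulmx1 mulmx0 addr0.
  exact: mxrankM_maxl.
have [up_sub dn_sub] : (usubmx M <= M)%MS /\ (dsubmx M <= M)%MS.
  by apply/andP; rewrite -col_mx_sub vsubmxK.
have M_up : (M <= usubmx M)%MS.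
  by rewrite -(mxrank_leqif_sup up_sub).2 rank_up rankM.
have /submxP[X] := submx_trans dn_sub M_up.
rewrite -[dsubmx M]hsubmxK -[usubmx M]hsubmxK mul_mx_row => /eq_row_mx[M21 M22].
by rewrite [drsubmx M]M22 [dlsubmx M]M21 mulmxK.
Qed.

Lemma mulmx_ker_block_basis : M *m ker_block_basis = 0.
Proof.
rewrite -[M]submxK mul_block_col !mulNmx !mulmxN !mulmxA mulmxV //.
by rewrite mul1mx !mulmx1 drsubmx_rank_ulsubmx !addNr col_mx0.
Qed.

End KernelBasis.

Section Similarity.
Variable R : comUnitRingType.

Lemma invmxM k (X Y : 'M[R]_k) :
  X \in unitmx -> Y \in unitmx -> invmx (X *m Y) = invmx Y *m invmx X.
Proof.
move=> X_unit Y_unit.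
have XY_unit : X *m Y \in unitmx by rewrite unitmx_mul X_unit.
have XYV : X *m Y *m (invmx Y *m invmx X) = 1%:M.
  by rewrite mulmxA mulmxK // mulmxV.
by rewrite -[LHS]mulmx1 -XYV mulKmx.
Qed.

Lemma invmx_conj k (X M : 'M[R]_k) : X \in unitmx ->
  invmx (X *m M *m invmx X) = X *m invmx M *m invmx X.
Proof.
move=> X_unit; have [M_unit | M_nonunit] := boolP (M \in unitmx).
  by rewrite !invmxM ?unitmx_mul ?unitmx_inv ?X_unit // invmxK mulmxA.
rewrite [invmx M]invmx_out // [LHS]invmx_out // inE !unitmx_mul.
by rewrite (negbTE M_nonunit) andbF.
Qed.

Lemma resolvent_conj k q r (s : R) (b : 'M[R]_(k, q)) (c : 'M[R]_(q, r))
    (d X : 'M[R]_q) : X \in unitmx ->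
  b *m invmx X *m invmx (s%:M - X *m d *m invmx X) *m (X *m c) =
  b *m invmx (s%:M - d) *m c.
Proof.
move=> X_unit.
have -> : s%:M - X *m d *m invmx X = X *m (s%:M - d) *m invmx X.
  by rewrite mulmxBr mulmxBl scalar_mxC mulmxK.
by rewrite invmx_conj // !mulmxA !mulmxKV.
Qed.

Definition block_diag1_mx k q (X : 'M[R]_q) : 'M[R]_(k + q) :=
  block_mx 1%:M 0 0 X.

Lemma block_diag1_mx_unit k q (X : 'M[R]_q) :
  (block_diag1_mx k X \in unitmx) = (X \in unitmx).
Proof. by rewrite block_diag_mx_unit unitmx1. Qed.

Lemma conj_block_diag1_mx k q (M : 'M[R]_(k + q)) (X : 'M[R]_q) :
  X \in unitmx ->
  block_diag1_mx k X *m M *m invmx (block_diag1_mx k X) =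
  block_mx (ulsubmx M) (ursubmx M *m invmx X)
           (X *m dlsubmx M) (X *m drsubmx M *m invmx X).
Proof.
move=> X_unit; rewrite invmx_block_diag ?block_diag_mx_unit ?unitmx1 // invmx1.
rewrite -[M in LHS]submxK !mulmx_block.
by rewrite !(mul1mx, mul0mx, mulmx1, mulmx0, addr0, add0r).
Qed.

Lemma mul_block_diag1_mx k q r (X : 'M[R]_q) (M : 'M[R]_(k + q, r)) :
  block_diag1_mx k X *m M = col_mx (usubmx M) (X *m dsubmx M).
Proof.
rewrite -[M in LHS]vsubmxK mul_block_col.
by rewrite !(mul1mx, mul0mx, addr0, add0r).
Qed.

End Similarity.

HB.instance Definition _ (R : realFieldType) :=
  GRing.RMorphism.copy (@cstF R) (@tofrac {poly R} \o polyC).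

Lemma unitmx_sI_sub (R : realFieldType) k (M : 'M[R]_k) :
  (sF R)%:M - mxF M \in unitmx.
Proof.
have -> : (sF R)%:M - mxF M = map_mx (@tofrac _) (char_poly_mx M).
  by apply/matrixP => i j; rewrite !mxE tofracB tofracMn.
rewrite unitmxE det_map_mx unitfE tofrac_eq0 -/(char_poly M) monic_neq0 //.
exact: char_poly_monic.
Qed.

Lemma map_resolvent_conj (R : realFieldType) k q r (b : 'M[R]_(k, q))
    (c : 'M[R]_(q, r)) (d X : 'M[R]_q) : X \in unitmx ->
  mxF (b *m invmx X) *m invmx ((sF R)%:M - mxF (X *m d *m invmx X))
    *m mxF (X *m c) =
  mxF b *m invmx ((sF R)%:M - mxF d) *m mxF c.
Proof.
move=> X_unit; rewrite /mxF !map_mxM !map_invmx.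
by apply: resolvent_conj; rewrite map_unitmx.
Qed.

Section SignalStructure.
Variables (R : realFieldType) (m l p1 p2 n2 : nat).
Variables (A : 'M[R]_(p1 + n2)) (Ahat : 'M[R]_(p1 + n2, l)) (B : 'M[R]_(p1 + n2, m))
          (Abar : 'M[R]_(l, p1 + n2)) (Atil : 'M[R]_l) (Bbar : 'M[R]_(l, m))
          (C : 'M[R]_(p1 + p2, p1 + n2)) (Cbar : 'M[R]_(p1 + p2, l))
          (D : 'M[R]_(p1 + p2, m)).
Local Notation Co' := (Co Abar Atil C Cbar).
Hypothesis C11_unit : ulsubmx Co' \in unitmx.

Lemma kernel_basis_dsubmx_unit N :
  kernel_basis Abar Atil C Cbar N -> dsubmx N \in unitmx.
Proof. by case; apply: ker_basis_dsubmx_unit. Qed.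

Lemma kernel_basis_ker_block_basis :
  \rank Co' = p1 -> kernel_basis Abar Atil C Cbar (ker_block_basis Co').
Proof.
move=> rankCo; split; first exact: mulmx_ker_block_basis.
exact: rank_ker_block_basis.
Qed.

Section ChangeOfBasis.
Variables N N' : 'M[R]_(p1 + n2, n2).
Hypotheses (N2_unit : dsubmx N \in unitmx) (N2'_unit : dsubmx N' \in unitmx).
Local Notation X := (invmx (dsubmx N') *m dsubmx N).
Local Notation S := (block_diag1_mx p1 X).

Let X_unit : X \in unitmx.
Proof. by rewrite unitmx_mul unitmx_inv N2'_unit. Qed.

Lemma Tmx_change_basis : Tmx Abar Atil C Cbar N' = S *m Tmx Abar Atil C Cbar N.
Proof.
rewrite /Tmx /block_diag1_mx mulmx_block (mulmxK N2_unit).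
by rewrite !(mul1mx, mul0mx, mulmx0, addr0, add0r).
Qed.

Lemma Tmx_unit : Tmx Abar Atil C Cbar N \in unitmx.
Proof. by rewrite unitmxE det_ublock unitrM -!unitmxE C11_unit unitmx_inv. Qed.

Lemma Az_change_basis :
  Az A Ahat Abar Atil C Cbar N' = S *m Az A Ahat Abar Atil C Cbar N *m invmx S.
Proof.
rewrite /Az Tmx_change_basis invmxM ?block_diag1_mx_unit ?Tmx_unit //.
by rewrite !mulmxA.
Qed.

Lemma Bz_change_basis :
  Bz Ahat B Abar Atil Bbar C Cbar N' = S *m Bz Ahat B Abar Atil Bbar C Cbar N.
Proof. by rewrite /Bz Tmx_change_basis mulmxA. Qed.

Lemma Wsig_change_basis :
  Wsig A Ahat Abar Atil C Cbar N' = Wsig A Ahat Abar Atil C Cbar N.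
Proof.
rewrite {1}/Wsig Az_change_basis conj_block_diag1_mx //.
by rewrite block_mxKul block_mxKur block_mxKdl block_mxKdr map_resolvent_conj.
Qed.

Lemma Vsig_change_basis :
  Vsig A Ahat B Abar Atil Bbar C Cbar N' =
  Vsig A Ahat B Abar Atil Bbar C Cbar N.
Proof.
rewrite {1}/Vsig Az_change_basis conj_block_diag1_mx // Bz_change_basis.
rewrite mul_block_diag1_mx col_mxKu col_mxKd block_mxKur block_mxKdr.
by rewrite map_resolvent_conj.
Qed.

Lemma signal_structure_change_basis a b :
  signal_structure A Ahat B Abar Atil Bbar C Cbar D N' a b =
  signal_structure A Ahat B Abar Atil Bbar C Cbar D N a b.
Proof.
rewrite /signal_structure /Ptil /Pdsf /Qdsf /Dhat.
by rewrite Wsig_change_basis Vsig_change_basis.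
Qed.

End ChangeOfBasis.
End SignalStructure.

Section SchurComplement.
Variables (R : comUnitRingType) (k q : nat).
Variables (X : 'M[R]_k) (Ah : 'M[R]_(k, q)) (Ab : 'M[R]_(q, k)) (K : 'M[R]_q).
Local Notation E := (invmx K).
Local Notation S := (invmx (X - Ah *m E *m Ab)).
Hypotheses (K_unit : K \in unitmx) (schur_unit : X - Ah *m E *m Ab \in unitmx).

Lemma invmx_block_schur :
  invmx (block_mx X (- Ah) (- Ab) K) =
  block_mx S (S *m Ah *m E) (E *m Ab *m S) (E + E *m Ab *m S *m Ah *m E).
Proof.
set Y := block_mx S _ _ _.
suff XY1 : block_mx X (- Ah) (- Ab) K *m Y = 1%:M.
  by rewrite -[LHS]mulmx1 -XY1 mulKmx //; case: (mulmx1_unit XY1).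
rewrite /Y mulmx_block (scalar_mx_block k q 1) !mulNmx.
congr block_mx.
- by rewrite !mulmxA -mulmxBl mulmxV.
- have -> : X *m (S *m Ah *m E) - Ah *m (E + E *m Ab *m S *m Ah *m E) =
            (X - Ah *m E *m Ab) *m S *m Ah *m E - Ah *m E.
    by rewrite mulmxDr opprD addrA !mulmxA !mulmxBl addrAC.
  by rewrite mulmxV // mul1mx subrr.
- by rewrite !mulmxA mulmxV // mul1mx addNr.
- by rewrite mulmxDr !mulmxA mulmxV // !mul1mx addrC addrK.
Qed.
End SchurComplement.

Lemma mul_row_block_schur_col (R : pzRingType) (k q p m : nat)
    (S : 'M[R]_k) (E : 'M[R]_q) (Ah : 'M[R]_(k, q)) (Ab : 'M[R]_(q, k))
    (c1 : 'M[R]_(p, k)) (c2 : 'M[R]_(p, q))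
    (b1 : 'M[R]_(k, m)) (b2 : 'M[R]_(q, m)) :
  row_mx c1 c2 *m
    block_mx S (S *m Ah *m E) (E *m Ab *m S) (E + E *m Ab *m S *m Ah *m E)
    *m col_mx b1 b2 =
  (c1 + c2 *m E *m Ab) *m S *m (b1 + Ah *m E *m b2) + c2 *m E *m b2.
Proof.
rewrite mul_row_block mul_row_col !mulmxDl !mulmxDr !mulmxA mulmxDl ?mulmxA.
by rewrite addrACA -!addrA (addrC (c2 *m E *m b2)).
Qed.

Lemma transfer_fun_minimal (R : realFieldType) (m n l p : nat)
    (A : 'M[R]_n) (Ahat : 'M[R]_(n, l)) (B : 'M[R]_(n, m))
    (Abar : 'M[R]_(l, n)) (Atil : 'M[R]_l) (Bbar : 'M[R]_(l, m))
    (C : 'M[R]_(p, n)) (Cbar : 'M[R]_(p, l)) (D : 'M[R]_(p, m)) :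
  (1%:M - Atil) \in unitmx ->
  transfer_fun A Ahat B Abar Atil Bbar C Cbar D =
  transfer_fun_gen A Ahat B Abar Atil Bbar C Cbar D.
Proof.
move=> Atil_unit; rewrite /transfer_fun /transfer_fun_gen.
set E := invmx (mxF (1%:M - Atil)).
have mxF_elim k r (M0 : 'M_(k, r)) M1 M2 :
    mxF (M0 + M1 *m invmx (1%:M - Atil) *m M2) = mxF M0 + mxF M1 *m E *m mxF M2.
  by rewrite /mxF map_mxD !map_mxM map_invmx.
have -> : block_mx (sF R)%:M 0 0 1%:M - mxF (block_mx A Ahat Abar Atil) =
          block_mx ((sF R)%:M - mxF A) (- mxF Ahat) (- mxF Abar) (mxF (1%:M - Atil)).
  by rewrite /mxF map_block_mx opp_block_mx add_block_mx !sub0r map_mxB map_mx1.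
have schurE : (sF R)%:M - mxF A - mxF Ahat *m E *m mxF Abar =
              (sF R)%:M - mxF (Ao A Ahat Abar Atil).
  by rewrite /Ao mxF_elim opprD addrA.
rewrite invmx_block_schur ?map_unitmx // schurE ?unitmx_sI_sub //.
have -> : mxF (row_mx C Cbar) = row_mx (mxF C) (mxF Cbar) by apply: map_row_mx.
have -> : mxF (col_mx B Bbar) = col_mx (mxF B) (mxF Bbar) by apply: map_col_mx.
rewrite mul_row_block_schur_col /Co /Bo /Do !mxF_elim.
by rewrite addrA addrAC.
Qed.

Theorem theorem1 (R : realFieldType) (m l p1 p2 n2 : nat)
  (A : 'M[R]_(p1 + n2)) (Ahat : 'M[R]_(p1 + n2, l)) (B : 'M[R]_(p1 + n2, m))
  (Abar : 'M[R]_(l, p1 + n2)) (Atil : 'M[R]_l) (Bbar : 'M[R]_(l, m))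
  (C : 'M[R]_(p1 + p2, p1 + n2)) (Cbar : 'M[R]_(p1 + p2, l))
  (D : 'M[R]_(p1 + p2, m)) :
  (1%:M - Atil) \in unitmx ->
  \rank (Co Abar Atil C Cbar) = p1 ->
  ulsubmx (Co Abar Atil C Cbar) \in unitmx ->
  ((exists P, max_admissible A Ahat B Abar Atil Bbar C Cbar D P) /\
   (forall P P', max_admissible A Ahat B Abar Atil Bbar C Cbar D P ->
                 max_admissible A Ahat B Abar Atil Bbar C Cbar D P' -> P = P'))
  /\
  ((exists N, kernel_basis Abar Atil C Cbar N) /\
   (forall N, kernel_basis Abar Atil C Cbar N -> dsubmx N \in unitmx) /\
   (forall N N', kernel_basis Abar Atil C Cbar N ->
                 kernel_basis Abar Atil C Cbar N' ->
      forall a b, signal_structure A Ahat B Abar Atil Bbar C Cbar D N a b =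
                  signal_structure A Ahat B Abar Atil Bbar C Cbar D N' a b))
  /\
  transfer_fun A Ahat B Abar Atil Bbar C Cbar D =
  transfer_fun_gen A Ahat B Abar Atil Bbar C Cbar D.
Proof.
move=> Atil_unit rankCo C11_unit; split; [|split].
- split=> [|P P' /max_admissibleE -> /max_admissibleE -> //].
  by eexists; apply/max_admissibleE.
- split; first by eexists; apply: kernel_basis_ker_block_basis.
  have N2_unit := kernel_basis_dsubmx_unit C11_unit.
  split=> [// | N N' /N2_unit N2 /N2_unit N2' a b].
  by symmetry; apply: signal_structure_change_basis.
- exact: transfer_fun_minimal.
Qed.
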